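(* Let $k\ge 3$ and let $a<b$ be integers. Let $S=\{a=p_1<p_2<\dots<p_{k-1}<p_k=b\}$ and let $a<q_2<\dots<q_{k-1}<b$ be integers with $p_j\le q_j$ for all $2\le j\le k-1$. Let $D=\{a,q_2,\dots,q_{k-1},b\}$ and suppose $\lambda_B(D)\preceq\lambda_A(D)$, where $A=a$, $B=b$. Suppose $2\le i\le k-1$ is such that $p_i<q_i$ and $p_i+1\notin S$, and let $S^{new}=(S\setminus\{p_i\})\cup\{p_i+1\}$. If $S^{new}\neq D$, then $\lambda_B(S^{new})\prec\lambda_A(S^{new})$.
   Context: For a finite set $S\subset\mathbb{Z}$ with $a=\min S$, $b=\max S$, set $L=b-a+1$; $\lambda_A(S)=a_1\cdots a_L$ with $a_i=1$ iff $a+i-1\in S$, and $\lambda_B(S)=b_1\cdots b_L$ with $b_i=1$ iff $b-i+1\in S$. For binary strings of equal length, $\prec$ (resp. $\preceq$) denotes strict (resp. non-strict) lexicographic order with $0<1$. (Here $S$ models robots on a line with head at $a$, tail at $b$, the inner robot $r_j$ at $p_j$ having target $q_j$.) *)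

(* finite sets of integers represented by lists of Z
   (only membership matters). *)
From Stdlib Require Import ZArith List Bool.
Import ListNotations.
Open Scope Z_scope.

Definition smin (s : list Z) : Z := fold_left Z.min s (hd 0 s).
Definition smax (s : list Z) : Z := fold_left Z.max s (hd 0 s).

Definition memb (s : list Z) (x : Z) : bool := existsb (Z.eqb x) s.

Definition slen (s : list Z) : nat := Z.to_nat (smax s - smin s + 1).

(* lambda_A(S) = a_1 ... a_L, a_i = 1 iff a + i - 1 in S  (i from 1) *)
Definition lamA (s : list Z) : list bool :=
  map (fun n : nat => memb s (smin s + Z.of_nat n)) (seq 0 (slen s)).

(* lambda_B(S) = b_1 ... b_L, b_i = 1 iff b - i + 1 in S *)
Definition lamB (s : list Z) : list bool :=
  map (fun n : nat => memb s (smax s - Z.of_nat n)) (seq 0 (slen s)).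

Fixpoint lexlt (u v : list bool) : Prop :=
  match u, v with
  | x :: u', y :: v' => (x = false /\ y = true) \/ (x = y /\ lexlt u' v')
  | _, _ => False
  end.

Definition lexle (u v : list bool) : Prop := lexlt u v \/ u = v.

Definition sameset (s t : list Z) : Prop := forall x, In x s <-> In x t.

(* Index the robots from 1 to k and compare, position by position,
   the configuration Snew = {x_1 < ... < x_k} (S with p_i moved to p_i + 1)
   with the target D = {d_1 < ... < d_k} (d_1 = a, d_j = q_j, d_k = b).
   Both are increasing, share their endpoints a and b, and x_j <= d_j for all
   j; as Snew <> D, some inequality x_j < d_j is strict.
   - Reading from a, the words lambda_A first differ at the first strict index
     j0: position x_{j0} is occupied in Snew but not in D, so
     lambda_A(D) < lambda_A(Snew).
   - Reading from b is the same statement for the mirror images z |-> a + b - z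
     of the two configurations (with the roles of Snew and D exchanged), so
     lambda_B(Snew) < lambda_B(D).
   Chaining with the hypothesis lambda_B(D) <= lambda_A(D) gives the theorem. *)

From Stdlib Require Import ZArith List Bool Lia.
Import ListNotations.
Open Scope Z_scope.

Lemma lexlt_trans u v w : lexlt u v -> lexlt v w -> lexlt u w.
Proof.
  revert v w; induction u as [|x u IH]; intros [|y v] [|z w]; simpl; try tauto.
  intros [[-> ->]|[-> Huv]] [[Hy ->]|[-> Hvw]]; try discriminate; eauto.
Qed.

Lemma lexle_lexlt_trans u v w : lexle u v -> lexlt v w -> lexlt u w.
Proof. intros [Huv| <-] Hvw; [exact (lexlt_trans _ _ _ Huv Hvw)|exact Hvw]. Qed.

Lemma lexlt_first_difference (f g : nat -> bool) L : forall s n,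
  (s <= n < s + L)%nat ->
  (forall m, (s <= m < n)%nat -> f m = g m) -> f n = false -> g n = true ->
  lexlt (map f (seq s L)) (map g (seq s L)).
Proof.
  induction L as [|L IH]; intros s n Hn Hagree Hf Hg; [lia|]. simpl.
  destruct (Nat.eq_dec n s) as [->|Hne]; [left; auto|].
  right; split; [apply Hagree; lia|].
  apply (IH (S s) n); auto; [lia|]. intros m Hm; apply Hagree; lia.
Qed.

Definition word (m : Z -> bool) (a : Z) (L : nat) : list bool :=
  map (fun n : nat => m (a + Z.of_nat n)) (seq 0 L).

Lemma lamB_word s :
  lamB s = word (fun z => memb s (smin s + smax s - z)) (smin s) (slen s).
Proof. apply map_ext; intros n; f_equal; lia. Qed.

Lemma memb_spec s z : memb s z = true <-> In z s.
Proof.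
  unfold memb; rewrite existsb_exists; split.
  - intros [y [Hy Heq]]; apply Z.eqb_eq in Heq; subst; exact Hy.
  - intros Hz; exists z; split; [exact Hz|apply Z.eqb_refl].
Qed.

Lemma fold_left_min_eq l acc lo : lo <= acc -> (forall y, In y l -> lo <= y) ->
  In lo (acc :: l) -> fold_left Z.min l acc = lo.
Proof.
  revert acc; induction l as [|h l IH]; intros acc Hacc Hl Hin; simpl.
  - destruct Hin as [->|[]]; reflexivity.
  - assert (Hh := Hl h (or_introl eq_refl)).
    apply IH; [lia|intros; apply Hl; now right|].
    destruct Hin as [<-|[<-|Hin]]; [left; lia|left; lia|now right].
Qed.

Lemma fold_left_max_eq l acc hi : acc <= hi -> (forall y, In y l -> y <= hi) ->
  In hi (acc :: l) -> fold_left Z.max l acc = hi.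
Proof.
  revert acc; induction l as [|h l IH]; intros acc Hacc Hl Hin; simpl.
  - destruct Hin as [->|[]]; reflexivity.
  - assert (Hh := Hl h (or_introl eq_refl)).
    apply IH; [lia|intros; apply Hl; now right|].
    destruct Hin as [<-|[<-|Hin]]; [left; lia|left; lia|now right].
Qed.

Lemma smin_eq s lo : (forall y, In y s -> lo <= y) -> In lo s -> smin s = lo.
Proof.
  intros Hlo Hin; destruct s as [|h t]; [destruct Hin|].
  apply fold_left_min_eq; [apply Hlo; left; auto|exact Hlo|now right].
Qed.

Lemma smax_eq s hi : (forall y, In y s -> y <= hi) -> In hi s -> smax s = hi.
Proof.
  intros Hhi Hin; destruct s as [|h t]; [destruct Hin|].
  apply fold_left_max_eq; [apply Hhi; left; auto|exact Hhi|now right].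
Qed.

Definition incr_on (f : nat -> Z) (k : nat) : Prop :=
  forall j j', (1 <= j)%nat -> (j < j' <= k)%nat -> f j < f j'.

Definition enumerates (m : Z -> bool) (f : nat -> Z) (k : nat) : Prop :=
  forall z, m z = true <-> exists j, (1 <= j <= k)%nat /\ z = f j.

Lemma incr_on_of_succ f k :
  (forall j, (1 <= j < k)%nat -> f j < f (S j)) -> incr_on f k.
Proof.
  intros Hsucc j j' Hj [Hjj' Hj'k]; induction Hjj' as [|j' Hjj' IH].
  - apply Hsucc; lia.
  - specialize (IH ltac:(lia)); specialize (Hsucc j' ltac:(lia)); lia.
Qed.

Lemma incr_on_le f k j j' :
  incr_on f k -> (1 <= j)%nat -> (j <= j' <= k)%nat -> f j <= f j'.
Proof.
  intros Hf Hj Hjj'; destruct (Nat.eq_dec j j') as [->|Hne]; [lia|].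
  specialize (Hf j j' Hj ltac:(lia)); lia.
Qed.

Lemma incr_on_inj f k j j' :
  incr_on f k -> (1 <= j <= k)%nat -> (1 <= j' <= k)%nat -> f j = f j' -> j = j'.
Proof.
  intros Hf Hj Hj' Heq; destruct (Nat.lt_total j j') as [Hlt|[Heq'|Hlt]]; auto.
  - specialize (Hf j j' ltac:(lia) ltac:(lia)); lia.
  - specialize (Hf j' j ltac:(lia) ltac:(lia)); lia.
Qed.

Lemma smin_smax_enum s f k : (1 <= k)%nat -> incr_on f k ->
  enumerates (memb s) f k -> smin s = f 1%nat /\ smax s = f k.
Proof.
  intros Hk Hf Hs.
  assert (Hbounds : forall y, In y s -> f 1%nat <= y <= f k).
  { intros y Hy; apply memb_spec, Hs in Hy as [j [Hj ->]].
    split; apply (incr_on_le f k); auto; lia. }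
  split; [apply smin_eq|apply smax_eq]; try (intros y Hy; specialize (Hbounds y Hy); lia);
    apply memb_spec, Hs; [exists 1%nat|exists k]; split; auto; lia.
Qed.

Lemma first_strict k (x d : nat -> Z) :
  (forall j, (1 <= j <= k)%nat -> x j <= d j) ->
  (forall j, (1 <= j <= k)%nat -> x j = d j) \/
  exists j0, (1 <= j0 <= k)%nat /\ x j0 < d j0 /\
             forall j, (1 <= j < j0)%nat -> x j = d j.
Proof.
  induction k as [|k IH]; intros Hle; [left; intros; lia|].
  destruct IH as [Heq|[j0 [Hj0 [Hlt Hbefore]]]]; [intros j Hj; apply Hle; lia| |].
  - destruct (Z.lt_ge_cases (x (S k)) (d (S k))) as [Hlt|Hge].
    + right; exists (S k); repeat split; auto; [lia|intros j Hj; apply Heq; lia].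
    + left; intros j Hj; destruct (Nat.eq_dec j (S k)) as [->|Hne].
      * specialize (Hle (S k) ltac:(lia)); lia.
      * apply Heq; lia.
  - right; exists j0; repeat split; auto; lia.
Qed.

Lemma bool_eq_of_iff (u v : bool) : (u = true <-> v = true) -> u = v.
Proof. destruct u, v; intuition. Qed.

Section FirstDifference.
Variables (k : nat) (x d : nat -> Z) (mX mD : Z -> bool).
Hypotheses (Ix : incr_on x k) (Id : incr_on d k)
  (Hle : forall j, (1 <= j <= k)%nat -> x j <= d j)
  (Hstrict : exists j, (1 <= j <= k)%nat /\ x j < d j)
  (HmX : enumerates mX x k) (HmD : enumerates mD d k).

(* Reading from the left, the two sets first differ at x_{j0}, j0 the first
   strict index: it is occupied by the x-set only. *)
Lemma word_lt a L : a <= x 1%nat -> x k < a + Z.of_nat L ->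
  lexlt (word mD a L) (word mX a L).
Proof.
  intros Ha HL.
  destruct (first_strict k x d Hle) as [Heq|[j0 [Hj0 [Hlt Hbefore]]]].
  { destruct Hstrict as [j [Hj Hlt]]; rewrite Heq in Hlt by exact Hj; lia. }
  assert (Hx0 : x 1%nat <= x j0 <= x k) by (split; apply (incr_on_le x k); auto; lia).
  (* below x_{j0}, both sets consist of the common values x_j = d_j, j < j0 *)
  assert (Hbelow : forall z j, (1 <= j <= k)%nat -> z < x j0 -> z = x j <-> z = d j).
  { intros z j Hj Hz; destruct (Nat.lt_ge_cases j j0) as [Hj'|Hj'].
    - rewrite (Hbefore j) by lia; tauto.
    - assert (x j0 <= x j) by (apply (incr_on_le x k j0 j Ix); lia).
      assert (d j0 <= d j) by (apply (incr_on_le d k j0 j Id); lia). lia. }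
  apply (lexlt_first_difference _ _ L 0 (Z.to_nat (x j0 - a))); [lia| | |].
  - intros m Hm; apply bool_eq_of_iff; cbv beta; rewrite (HmX _), (HmD _).
    split; intros [j [Hj Hz]]; exists j; split; auto; apply (Hbelow _ j Hj); auto; lia.
  - destruct (mD _) eqn:E; auto; apply HmD in E as [j [Hj Hz]].
    destruct (Nat.lt_ge_cases j j0) as [Hj'|Hj'].
    + rewrite <- (Hbefore j) in Hz by lia.
      specialize (Ix j j0 ltac:(lia) ltac:(lia)); lia.
    + assert (d j0 <= d j) by (apply (incr_on_le d k j0 j Id); lia). lia.
  - apply HmX; exists j0; split; auto; lia.
Qed.

End FirstDifference.

Definition mirror (c : Z) (f : nat -> Z) (k : nat) : nat -> Z :=
  fun j => c - f (S k - j)%nat.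

Lemma mirror_incr c f k : incr_on f k -> incr_on (mirror c f k) k.
Proof. intros Hf j j' Hj Hjj'; unfold mirror; specialize (Hf (S k - j')%nat (S k - j)%nat); lia. Qed.

Lemma mirror_enumerates c m f k :
  enumerates m f k -> enumerates (fun z => m (c - z)) (mirror c f k) k.
Proof.
  intros Hm z; rewrite (Hm (c - z)); unfold mirror; split; intros [j [Hj Hz]].
  - exists (S k - j)%nat; split; [lia|]. replace (S k - (S k - j))%nat with j by lia; lia.
  - exists (S k - j)%nat; split; [lia|lia].
Qed.

Section LastDifference.
Variables (k : nat) (x d : nat -> Z) (mX mD : Z -> bool).
Hypotheses (Ix : incr_on x k) (Id : incr_on d k)
  (Hle : forall j, (1 <= j <= k)%nat -> x j <= d j)
  (Hstrict : exists j, (1 <= j <= k)%nat /\ x j < d j)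
  (HmX : enumerates mX x k) (HmD : enumerates mD d k).

(* Reading the sets through z |-> c - z reverses the roles: the mirrored
   d-sequence lies below the mirrored x-sequence, so [word_lt] applies. *)
Lemma mirror_word_lt c a L : (1 <= k)%nat -> a + d k <= c ->
  c < a + Z.of_nat L + d 1%nat ->
  lexlt (word (fun z => mX (c - z)) a L) (word (fun z => mD (c - z)) a L).
Proof.
  intros Hk Hc1 Hc2.
  apply (word_lt k (mirror c d k) (mirror c x k));
    auto using mirror_incr, mirror_enumerates; unfold mirror.
  - intros j Hj; specialize (Hle (S k - j)%nat ltac:(lia)); lia.
  - destruct Hstrict as [j [Hj Hlt]]; exists (S k - j)%nat; split; [lia|].
    replace (S k - (S k - j))%nat with j by lia; lia.
  - replace (S k - 1)%nat with k by lia; lia.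
  - replace (S k - k)%nat with 1%nat by lia; lia.
Qed.

End LastDifference.

Lemma lam_compare s t k (x d : nat -> Z) : (1 <= k)%nat ->
  incr_on x k -> incr_on d k -> x 1%nat = d 1%nat -> x k = d k ->
  (forall j, (1 <= j <= k)%nat -> x j <= d j) ->
  (exists j, (1 <= j <= k)%nat /\ x j < d j) ->
  enumerates (memb s) x k -> enumerates (memb t) d k ->
  lexlt (lamB s) (lamB t) /\ lexlt (lamA t) (lamA s).
Proof.
  intros Hk Ix Id H1 Hk' Hle Hstrict Hs Ht.
  destruct (smin_smax_enum s x k Hk Ix Hs) as [Es1 Es2].
  destruct (smin_smax_enum t d k Hk Id Ht) as [Et1 Et2].
  rewrite !lamB_word; unfold lamA, slen; fold (word (memb s)) (word (memb t)).
  rewrite Es1, Es2, Et1, Et2, <- H1, <- Hk'.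
  split.
  - apply (mirror_word_lt k x d); auto; lia.
  - apply (word_lt k x d); auto; lia.
Qed.

Lemma enumerates_map_seq (f : nat -> Z) k : enumerates (memb (map f (seq 1 k))) f k.
Proof.
  intros z; rewrite memb_spec, in_map_iff; split.
  - intros [j [<- Hj]]; apply in_seq in Hj; exists j; split; auto; lia.
  - intros [j [Hj ->]]; exists j; split; auto; apply in_seq; lia.
Qed.

Lemma enumerates_replace (p : nat -> Z) k i v : incr_on p k -> (1 <= i <= k)%nat ->
  enumerates (memb (v :: filter (fun z => negb (z =? p i)) (map p (seq 1 k))))
             (fun j => if (j =? i)%nat then v else p j) k.
Proof.
  intros Hp Hi z; rewrite memb_spec; simpl; rewrite filter_In, <- memb_spec,
    (enumerates_map_seq p k z); split.
  - intros [<-|[[j [Hj ->]] Hne]]; [exists i; rewrite Nat.eqb_refl; auto|].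
    exists j; split; auto; destruct (Nat.eqb_spec j i) as [->|]; auto.
    rewrite Z.eqb_refl in Hne; discriminate.
  - intros [j [Hj ->]]; destruct (Nat.eqb_spec j i) as [->|Hne]; [now left|right].
    split; [exists j; auto|]. destruct (Z.eqb_spec (p j) (p i)) as [Heq|]; auto.
    exfalso; exact (Hne (incr_on_inj p k j i Hp Hj Hi Heq)).
Qed.

Lemma replace_incr (p : nat -> Z) k i v : incr_on p k -> (1 < i < k)%nat ->
  p i < v -> v < p (S i) -> incr_on (fun j => if (j =? i)%nat then v else p j) k.
Proof.
  intros Hp Hi Hv1 Hv2; apply incr_on_of_succ; intros j Hj.
  assert (Hstep := Hp j (S j) ltac:(lia) ltac:(lia)).
  destruct (Nat.eqb_spec j i); destruct (Nat.eqb_spec (S j) i); subst; lia.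
Qed.

Definition frame (a : Z) (q : nat -> Z) (b : Z) (k : nat) : nat -> Z :=
  fun j => if (j =? 1)%nat then a else if (j =? k)%nat then b else q j.

Lemma enumerates_frame a q b k : (2 <= k)%nat ->
  enumerates (memb (a :: map q (seq 2 (k - 2)) ++ [b])) (frame a q b k) k.
Proof.
  intros Hk z; rewrite memb_spec; simpl; rewrite in_app_iff, in_map_iff; simpl;
    unfold frame; split.
  - intros [<-|[[j [<- Hj]]|[<-|[]]]].
    + exists 1%nat; split; [lia|reflexivity].
    + apply in_seq in Hj; exists j;
        destruct (Nat.eqb_spec j 1); destruct (Nat.eqb_spec j k); split; auto; lia.
    + exists k; destruct (Nat.eqb_spec k 1); [lia|]; rewrite Nat.eqb_refl; split; [lia|reflexivity].
  - intros [j [Hj ->]]; destruct (Nat.eqb_spec j 1); [now left|right].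
    destruct (Nat.eqb_spec j k); [now right; left|left].
    exists j; split; auto; apply in_seq; lia.
Qed.

Lemma frame_incr a q b k : (3 <= k)%nat -> a < q 2%nat -> q (k - 1)%nat < b ->
  (forall j, (2 <= j < k - 1)%nat -> q j < q (S j)) -> incr_on (frame a q b k) k.
Proof.
  intros Hk Ha Hb Hq; apply incr_on_of_succ; intros j Hj; unfold frame.
  destruct (Nat.eqb_spec j 1) as [->|]; [destruct (Nat.eqb_spec 2 k); [lia|exact Ha]|].
  destruct (Nat.eqb_spec (S j) 1); [lia|]; destruct (Nat.eqb_spec j k); [lia|].
  destruct (Nat.eqb_spec (S j) k) as [<-|].
  - rewrite Nat.sub_succ, Nat.sub_0_r in Hb; exact Hb.
  - apply Hq; lia.
Qed.

Lemma enumerations_differ s t k (x d : nat -> Z) :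
  enumerates (memb s) x k -> enumerates (memb t) d k ->
  (forall j, (1 <= j <= k)%nat -> x j <= d j) -> ~ sameset s t ->
  exists j, (1 <= j <= k)%nat /\ x j < d j.
Proof.
  intros Hs Ht Hle Hne; destruct (first_strict k x d Hle) as [Heq|[j [Hj [Hlt _]]]].
  - exfalso; apply Hne; intros z; rewrite <- !memb_spec, (Hs z), (Ht z).
    split; intros [j [Hj ->]]; exists j; rewrite Heq; auto.
  - exists j; auto.
Qed.

Theorem lemma2 (k : nat) (a b : Z) (p q : nat -> Z) (i : nat) :
  (3 <= k)%nat ->
  a < b ->
  p 1%nat = a -> p k = b ->
  (forall j : nat, (1 <= j < k)%nat -> p j < p (S j)) ->
  a < q 2%nat -> q (k - 1)%nat < b ->
  (forall j : nat, (2 <= j < k - 1)%nat -> q j < q (S j)) ->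
  (forall j : nat, (2 <= j <= k - 1)%nat -> p j <= q j) ->
  let S := map p (seq 1 k) in
  let D := a :: map q (seq 2 (k - 2)) ++ [b] in
  lexle (lamB D) (lamA D) ->
  (2 <= i <= k - 1)%nat ->
  p i < q i ->
  ~ In (p i + 1) S ->
  let Snew := (p i + 1) :: filter (fun x => negb (x =? p i)) S in
  ~ sameset Snew D ->
  lexlt (lamB Snew) (lamA Snew).
Proof.
  intros Hk Hab Hp1 Hpk Hp Hq2 Hqk Hq Hpq S D HD Hi Hpqi HnS Snew Hne.
  set (x := fun j => if (j =? i)%nat then p i + 1 else p j).
  assert (Ip : incr_on p k) by (apply incr_on_of_succ; exact Hp).
  (* p_i + 1 < p_{i+1}, since the cell p_i + 1 is free *)
  assert (Hnext : p i + 1 < p (Datatypes.S i)).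
  { assert (Hin : p (Datatypes.S i) <> p i + 1).
    { intros Heq; apply HnS, memb_spec, (enumerates_map_seq p k); rewrite <- Heq.
      exists (Datatypes.S i); split; auto; lia. }
    specialize (Ip i (Datatypes.S i) ltac:(lia) ltac:(lia)); lia. }
  assert (Ix : incr_on x k) by (apply replace_incr; auto; lia).
  assert (Id : incr_on (frame a q b k) k) by (apply frame_incr; auto).
  assert (Hle : forall j, (1 <= j <= k)%nat -> x j <= frame a q b k j).
  { intros j Hj; unfold x, frame.
    destruct (Nat.eqb_spec j i); destruct (Nat.eqb_spec j 1);
      destruct (Nat.eqb_spec j k); subst; try lia; apply Hpq; lia. }
  assert (HmX : enumerates (memb Snew) x k) by (apply enumerates_replace; auto; lia).
  assert (HmD : enumerates (memb D) (frame a q b k) k) by (apply enumerates_frame; lia).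
  assert (Hends : x 1%nat = frame a q b k 1%nat /\ x k = frame a q b k k).
  { unfold x, frame; destruct (Nat.eqb_spec 1 i), (Nat.eqb_spec k i), (Nat.eqb_spec k 1);
      try lia; rewrite !Nat.eqb_refl; split; assumption. }
  assert (Hstrict := enumerations_differ Snew D k x _ HmX HmD Hle Hne).
  destruct (lam_compare Snew D k x (frame a q b k) ltac:(lia) Ix Id
              (proj1 Hends) (proj2 Hends) Hle Hstrict HmX HmD) as [HB HA].
  exact (lexlt_trans _ _ _ HB (lexle_lexlt_trans _ _ _ HD HA)).
Qed.
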